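(* Let a document collection $\mathcal{D}$ be partitioned into $n$ pairwise disjoint shards $D_1,\dots,D_n$, and let $r\ge 1$ identical replicas of this partition be stored, each of the $nr$ shard replicas on its own node. Fix a query $q$ with a unique relevant document $d_q$, and let $p(j)$ be the probability that $d_q$ is stored in $D_j$ (so $\sum_{j=1}^n p(j)=1$). Each node independently fails to respond with probability $f\in[0,1]$, independently of the location of $d_q$. A selection chooses some replicas of some shards; for $1\le i\le r$ let $S_i\subseteq\{D_1,\dots,D_n\}$ be the set of shards of which at least $i$ replicas are selected (so $S_r\subseteq S_{r-1}\subseteq\dots\subseteq S_1$). Let $SP(f,\bigcup_{i=1}^r S_i)$ denote the probability that $d_q$ is found, i.e., that $d_q$ lies in a shard of which some selected replica responds. Then \[ SP\Big(f,\bigcup_{i=1}^r S_i\Big)=(1-f)\left(\sum_{D_j\in S_1}p(j)+\sum_{D_j\in S_2}f\,p(j)+\dots+\sum_{D_j\in S_r}f^{r-1}p(j)\right). \]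
   Context: Distributed search model: each node searches only its own shard replica; the query is sent to the selected replicas, and the results of nodes that fail to respond (probability $f$ each, independently) are dropped. *)

From mathcomp Require Import all_boot all_order all_algebra.
Set Implicit Arguments. Unset Strict Implicit. Unset Printing Implicit Defensive.
Import Order.TTheory GRing.Theory Num.Theory.
Local Open Scope ring_scope.

(* Nodes: pairs (shard j, replica k), j : 'I_n, k : 'I_r.  A selection is a
   set of nodes.  A failure pattern w : {ffun 'I_n * 'I_r -> bool} says which
   nodes fail (true = fails to respond). *)

Definition fail_weight {R : pzRingType} (n r : nat) (f : R)
  (w : {ffun 'I_n * 'I_r -> bool}) : R :=
  \prod_(x : 'I_n * 'I_r) (if w x then f else 1 - f).

Definition found (n r : nat) (sel : {set 'I_n * 'I_r}) (j : 'I_n)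
  (w : {ffun 'I_n * 'I_r -> bool}) : bool :=
  [exists k : 'I_r, ((j, k) \in sel) && ~~ w (j, k)].

Definition SP {R : pzRingType} (n r : nat) (p : 'I_n -> R) (f : R)
  (sel : {set 'I_n * 'I_r}) : R :=
  \sum_(j : 'I_n) \sum_(w : {ffun 'I_n * 'I_r -> bool})
     (if found sel j w then p j * fail_weight f w else 0).

Definition Sset (n r : nat) (sel : {set 'I_n * 'I_r}) (i : nat) : {set 'I_n} :=
  [set j : 'I_n | (i <= #|[set k : 'I_r | (j, k) \in sel]|)%N].

(** Conditioned on the location [j] of [d_q], the query fails exactly when all
    [m_j] selected replicas of shard [j] fail, which by independence has
    probability [f ^ m_j]; hence [SP = \sum_j p(j) (1 - f ^ m_j)].  Expanding
    [1 - f ^ m_j = (1 - f) \sum_(i < m_j) f ^ i] and exchanging the two sums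
    groups the shards with [m_j > i], i.e. those of [S_(i+1)]. *)

From mathcomp Require Import all_boot all_order all_algebra ring.
Set Implicit Arguments. Unset Strict Implicit. Unset Printing Implicit Defensive.
Import Order.TTheory GRing.Theory Num.Theory.
Local Open Scope ring_scope.

Section BernoulliFailures.
Variables (R : comPzRingType) (T : finType) (f : R).

Definition bernoulli_weight (w : {ffun T -> bool}) : R :=
  \prod_x (if w x then f else 1 - f).

Lemma sum_bernoulli_weight : \sum_(w : {ffun T -> bool}) bernoulli_weight w = 1.
Proof.
rewrite -(bigA_distr_bigA (fun x (b : bool) => if b then f else 1 - f)).
by apply: big1 => x _; rewrite big_bool /= subrKC.
Qed.

Lemma sum_bernoulli_weight_all (A : {set T}) :
  \sum_(w : {ffun T -> bool})
     (if [forall x in A, w x] then bernoulli_weight w else 0) = f ^+ #|A|.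
Proof.
(* On [A] the factor [1 - f] is replaced by [0], which kills the patterns
   where some node of [A] responds. *)
pose G x (b : bool) := if b then f else if x \in A then 0 else 1 - f.
have prodG (w : {ffun T -> bool}) : \prod_x G x (w x) =
    if [forall x in A, w x] then bernoulli_weight w else 0.
  case: ifPn => [/forall_inP allA | /forall_inPn [x xA /negbTE wx]].
    apply: eq_bigr => x _; rewrite /G.
    by case: ifPn => // /negbTE wx; case: ifPn => // /allA; rewrite wx.
  by rewrite (bigD1 x) //= /G wx xA mul0r.
under eq_bigr do rewrite -prodG.
rewrite -(bigA_distr_bigA G) (bigID (mem A)) /=.
rewrite [X in _ * X]big1 ?mulr1 => [|x /negbTE xA]; last first.
  by rewrite big_bool /G xA /= subrKC.
rewrite (eq_bigr (fun=> f)) ?prodr_const // => x xA.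
by rewrite big_bool /G xA /= addr0.
Qed.

Lemma sum_bernoulli_weight_some_not (A : {set T}) :
  \sum_(w : {ffun T -> bool})
     (if [exists x in A, ~~ w x] then bernoulli_weight w else 0) =
  1 - f ^+ #|A|.
Proof.
rewrite -sum_bernoulli_weight -sum_bernoulli_weight_all -sumrB.
apply: eq_bigr => w _; rewrite -negb_forall_in.
by case: [forall x in A, w x]; rewrite ?subr0 ?subrr.
Qed.

End BernoulliFailures.

Lemma one_subX_sum_cond (R : pzRingType) (x : R) (m r : nat) : (m <= r)%N ->
  1 - x ^+ m = (1 - x) * \sum_(i < r | (i < m)%N) x ^+ i.
Proof.
move=> le_mr; rewrite -(big_ord_widen_cond _ xpredT (fun i => x ^+ i) le_mr).
by rewrite -opprB subrX1 -mulNr opprB.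
Qed.

Section SuccessProbability.
Variables (R : comPzRingType) (n r : nat) (sel : {set 'I_n * 'I_r}).

Definition replicas (j : 'I_n) : {set 'I_r} := [set k | (j, k) \in sel].

Lemma foundE j w : found sel j w = [exists x in pair j @: replicas j, ~~ w x].
Proof.
apply/existsP/exists_inP => [[k /andP [jk_sel wjk]] | [_ /imsetP [k + ->] wjk]].
  by exists (j, k); rewrite ?imset_f ?inE.
by rewrite inE => jk_sel; exists k; rewrite jk_sel.
Qed.

Lemma card_replica_nodes j : #|pair j @: replicas j| = #|replicas j|.
Proof. by rewrite card_imset // => k k' []. Qed.

Lemma SP_replicasE (p : 'I_n -> R) (f : R) :
  SP p f sel = \sum_j p j * (1 - f ^+ #|replicas j|).
Proof.
apply: eq_bigr => j _.
rewrite -card_replica_nodes -sum_bernoulli_weight_some_not mulr_sumr.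
by apply: eq_bigr => w _; rewrite foundE; case: ifP; rewrite ?mulr0.
Qed.

End SuccessProbability.

Theorem lemma1 (R : realFieldType) (n r : nat) (p : 'I_n -> R) (f : R)
  (sel : {set 'I_n * 'I_r}) :
  (1 <= r)%N ->
  (forall j, 0 <= p j) -> \sum_(j : 'I_n) p j = 1 ->
  0 <= f <= 1 ->
  SP p f sel =
  (1 - f) * \sum_(i < r) f ^+ i * \sum_(j in Sset sel i.+1) p j.
Proof.
move=> _ _ _ _.
have replicas_le_r j : (#|replicas sel j| <= r)%N.
  by rewrite (leq_trans (max_card _)) ?card_ord.
rewrite SP_replicasE.
under eq_bigr do rewrite (one_subX_sum_cond f (replicas_le_r _)) big_mkcond.
rewrite mulr_sumr; under eq_bigr do rewrite big_distrr big_distrr.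
rewrite exchange_big; apply: eq_bigr => i _ /=.
rewrite [X in _ * (_ * X)]big_mkcond !mulr_sumr; apply: eq_bigr => j _.
by rewrite /Sset inE; case: ifP => _; rewrite ?mulr0 //; ring.
Qed.
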